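(* Let $H$ be a real Hilbert space, $A:H\to c_0$ bounded linear with adjoint $A^*:\ell^1\to H$ (identifying $c_0^*=\ell^1$), and assume $A$ and $A^*$ are injective. Let $u^\dagger\in\ell^1$ and suppose there exists $v^\dagger\in H$ with $\|Av^\dagger\|_\infty\le1$ and $(Av^\dagger)_i=\operatorname{sign}(u^\dagger_i)$ whenever $u^\dagger_i\ne0$. Then there exists $v^\ddagger\in H$ with $\|Av^\ddagger\|_\infty\le1$, $(Av^\ddagger)_i=\operatorname{sign}(u^\dagger_i)$ whenever $u^\dagger_i\ne0$, and $|(Av^\ddagger)_i|<1$ whenever $u^\dagger_i=0$.
   Context: $A^*$ is defined by $\langle A^*u,z\rangle=\sum_iu_i(Az)_i$. $\operatorname{sign}(t)=t/|t|$ for $t\neq0$. *)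

From HB Require Import structures.
From mathcomp Require Import all_boot all_order all_algebra.
From mathcomp Require Import all_classical all_reals all_analysis.
Set Implicit Arguments. Unset Strict Implicit. Unset Printing Implicit Defensive.
Import Order.TTheory GRing.Theory Num.Theory.
Import numFieldNormedType.Exports.
Local Open Scope ring_scope.
Local Open Scope classical_set_scope.

(* [inner] is a real inner product on H inducing the norm of H:
   together with completeness of H this makes H a real Hilbert space. *)
Definition is_inner_product (R : realType) (H : normedModType R)
  (inner : H -> H -> R) : Prop :=
  [/\ (forall x y, inner x y = inner y x),
      (forall a x y z, inner (a *: x + y) z = a * inner x z + inner y z),
      (forall x, 0 <= inner x x) &
      (forall x, inner x x = `|x| ^+ 2)].

Definition in_c0 (R : realType) (u : nat -> R) : Prop := u @ \oo --> (0 : R).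

Definition in_l1 (R : realType) (u : nat -> R) : Prop :=
  cvgn (series (fun i => `|u i|)).

Definition ser_sum (R : realType) (u : nat -> R) : R := limn (series u).

Definition bounded_linear_to_c0 (R : realType) (H : normedModType R)
  (A : H -> nat -> R) : Prop :=
  [/\ (forall a x y, A (a *: x + y) = (fun i => a * A x i + A y i)),
      (forall x, in_c0 (A x)) &
      (exists C : R, forall x i, `|A x i| <= C * `|x|)].

Definition is_adjoint (R : realType) (H : normedModType R)
  (inner : H -> H -> R) (A : H -> nat -> R) (Astar : (nat -> R) -> H) : Prop :=
  forall u, in_l1 u -> forall z, inner (Astar u) z = ser_sum (fun i => u i * A z i).

Definition sgn (R : realType) (t : R) : R := t / `|t|.

From HB Require Import structures.
From mathcomp Require Import all_boot all_order all_algebra.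
From mathcomp Require Import all_classical all_reals all_analysis.
From mathcomp Require Import ring lra.
Import Order.TTheory GRing.Theory Num.Theory.
Import numFieldNormedType.Exports.
Local Open Scope ring_scope.
Local Open Scope classical_set_scope.

(* Since A v lies in c_0, u_dag has finite support, contained in some [0, N).
   Injectivity of A^* on finitely supported sequences says that the coordinate
   functionals z |-> (A z)_i, i < N, are linearly independent, so z |-> ((A z)_i)_{i<N}
   is onto R^N.  Pick w with (A w)_i = (A v)_i off the support and (A w)_i = 0 on it,
   for i < N; then v - t w for a small t > 0 is the required certificate. *)

Section FiniteSupport.
Context {R : realType}.
Implicit Types u : nat -> R.

Lemma cvg_series_eventually0 u N :
  (forall n, (N <= n)%N -> u n = 0) -> series u @ \oo --> \sum_(0 <= k < N) u k.
Proof.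
move=> u0; apply: cvg_near_cst; exists N => // n /= Nn.
rewrite seriesEnat /= (big_cat_nat (leq0n N) Nn) /=.
rewrite [X in _ + X]big_nat_cond [X in _ + X]big1 ?addr0 //.
by move=> i /andP[/andP[Ni _] _]; exact: u0.
Qed.

Lemma in_l1_eventually0 {u N} : (forall n, (N <= n)%N -> u n = 0) -> in_l1 u.
Proof.
move=> u0; apply/cvg_ex; exists (\sum_(0 <= k < N) `|u k|).
by apply: cvg_series_eventually0 => n /u0 ->; rewrite normr0.
Qed.

Lemma ser_sum_eventually0 {u} N :
  (forall n, (N <= n)%N -> u n = 0) -> ser_sum u = \sum_(0 <= k < N) u k.
Proof. by move=> u0; apply: cvg_lim => //; exact: cvg_series_eventually0. Qed.

End FiniteSupport.

Lemma norm_sgn (R : realType) (t : R) : t != 0 -> `|sgn t| = 1.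
Proof. by move=> t0; rewrite /sgn normrM normfV normr_id divff ?normr_eq0. Qed.

Section PointwiseLinear.
Context {R : realType} {H : normedModType R} {A : H -> nat -> R}.
Hypothesis A_linear : forall a x y, A (a *: x + y) = (fun i => a * A x i + A y i).

Lemma A0 i : A 0 i = 0.
Proof.
have /(congr1 (fun f => f i)) := A_linear 1 0 0.
by rewrite /= scaler0 addr0 mul1r -{1}[A 0 i]addr0 => /addrI.
Qed.

Lemma AZ a x i : A (a *: x) i = a * A x i.
Proof. by have /(congr1 (fun f => f i)) := A_linear a x 0; rewrite /= addr0 A0 addr0. Qed.

Lemma AD x y i : A (x + y) i = A x i + A y i.
Proof. by have /(congr1 (fun f => f i)) := A_linear 1 x y; rewrite /= scale1r mul1r. Qed.

Lemma AB x y i : A (x - y) i = A x i - A y i.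
Proof. by rewrite AD -scaleN1r AZ mulN1r. Qed.

Lemma A_sum m n (f : nat -> H) i :
  A (\sum_(m <= j < n) f j) i = \sum_(m <= j < n) A (f j) i.
Proof. by apply: (big_morph (A^~ i)) => [x y|]; rewrite ?AD ?A0. Qed.

Lemma perturbation_lt1 {P : pred nat} {N} {v w : H} {M : R} :
  (forall i, `|A v i| <= 1) ->
  (forall n, (N <= n)%N -> P n /\ `|A v n| < 1/2) ->
  (forall i, `|A w i| <= M) ->
  (forall i, (i < N)%N -> A w i = if P i then A v i else 0) ->
  exists v' : H,
    (forall i, ~~ P i -> A v' i = A v i) /\ (forall i, P i -> `|A v' i| < 1).
Proof.
move=> v1 vN wM wN.
have M0 : 0 <= M := le_trans (normr_ge0 _) (wM 0%N).
pose t := (2 * (M + 1))^-1.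
have t0 : 0 < t by rewrite invr_gt0; lra.
have t1 : t <= 1/2 by rewrite -[X in _ <= X]invrK lef_pV2 ?posrE; lra.
have tM : t * M < 1/2 by rewrite mulrC ltr_pdivrMr; lra.
have shrink i : `|(1 - t) * A v i| < 1.
  rewrite normrM ger0_norm; last lra.
  by have := v1 i; have := normr_ge0 (A v i); nra.
exists ((- t) *: w + v); rewrite A_linear; split=> i Pi.
  have iN : (i < N)%N by rewrite ltnNge; apply: contra Pi => /vN[].
  by rewrite wN // (negbTE Pi) mulr0 add0r.
have [iN|Ni] := ltnP i N.
  by rewrite wN // Pi -[X in _ + X]mul1r -mulrDl addrC shrink.
apply: (le_lt_trans (ler_normD _ _)); rewrite normrM normrN (gtr0_norm t0).
have [_ vNi] := vN i Ni; have : t * `|A w i| <= t * M by rewrite ler_wpM2l ?wM ?ltW.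
lra.
Qed.

End PointwiseLinear.

Section Adjoint.
Context {R : realType} {H : normedModType R} {inner : H -> H -> R}.
Context {A : H -> nat -> R} {Astar : (nat -> R) -> H}.
Hypothesis inner_ip : is_inner_product inner.
Hypothesis A_linear : forall a x y, A (a *: x + y) = (fun i => a * A x i + A y i).
Hypothesis Astar_adjoint : is_adjoint inner A Astar.
Hypothesis Astar_inj : forall u w, in_l1 u -> in_l1 w -> Astar u = Astar w -> u = w.

Lemma Astar_eq0 c : in_l1 c -> (forall z, ser_sum (fun i => c i * A z i) = 0) ->
  Astar c = 0.
Proof.
case: inner_ip => _ _ _ inner_norm c_l1 c_annih.
have /eqP := Astar_adjoint c c_l1 (Astar c).
by rewrite c_annih inner_norm sqrf_eq0 normr_eq0 => /eqP.
Qed.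

Lemma coord_functionals_free {N} {c : nat -> R} :
  (forall z, \sum_(0 <= i < N) c i * A z i = 0) -> forall i, (i < N)%N -> c i = 0.
Proof.
move=> c_annih i iN; pose c' n := if (n < N)%N then c n else 0.
have c'N n : (N <= n)%N -> c' n = 0 by rewrite /c' ltnNge => ->.
have c'_l1 : in_l1 c' := in_l1_eventually0 c'N.
have zero_l1 : in_l1 (fun=> 0 : R) by apply: (in_l1_eventually0 (N := 0)).
have Astar_c' : Astar c' = 0.
  apply: Astar_eq0 => // z; rewrite (ser_sum_eventually0 N); last first.
    by move=> n /c'N ->; rewrite mul0r.
  rewrite -[RHS](c_annih z) big_nat_cond [RHS]big_nat_cond.
  by apply: eq_bigr => n /andP[/andP[_ nN] _]; rewrite /c' nN.
have Astar_0 : Astar (fun=> 0) = 0.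
  apply: Astar_eq0 => // z; rewrite (ser_sum_eventually0 0) ?big_geq //.
  by move=> n _; rewrite mul0r.
have /(congr1 (fun f => f i)) := Astar_inj _ _ c'_l1 zero_l1 (etrans Astar_c' (esym Astar_0)).
by rewrite /c' iN.
Qed.

Lemma dual_vector_exists {N} :
  (forall g : nat -> R, exists w : H, forall i, (i < N)%N -> A w i = g i) ->
  exists z : H, (forall j, (j < N)%N -> A z j = 0) /\ A z N = 1.
Proof.
move=> onto; have [e e_dual] := choice (fun i => onto (fun j => (i == j)%:R)).
apply: contrapT => no_dual.
have ker_sub y : (forall j, (j < N)%N -> A y j = 0) -> A y N = 0.
  move=> y0; have [//|yN0] := eqVneq (A y N) 0; case: no_dual.
  exists ((A y N)^-1 *: y); rewrite AZ // mulVf //.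
  by split=> // j /y0 jN; rewrite AZ // jN mulr0.
have c_annih z : \sum_(0 <= i < N.+1) (if i == N then 1 else - A (e i) N) * A z i = 0.
  (* z minus its expansion along the dual family vanishes on [0, N) *)
  pose y := z - \sum_(0 <= i < N) A z i *: e i.
  have y0 j : (j < N)%N -> A y j = 0.
    move=> jN; rewrite AB // A_sum //.
    under eq_bigr => i _ do rewrite AZ // e_dual // mulr_natr mulrb.
    by rewrite -big_mkcond big_nat1_eq /= jN subrr.
  have := ker_sub y y0; rewrite AB // A_sum // => /subr0_eq zN.
  rewrite big_nat_recr //= eqxx mul1r zN -big_split big_nat_cond big1 //=.
  by move=> i /andP[iN _]; rewrite (ltn_eqF iN) AZ // mulNr mulrC addNr.
have := coord_functionals_free c_annih N (ltnSn N).
by rewrite eqxx => /eqP; rewrite oner_eq0.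
Qed.

Lemma coords_surjective N (g : nat -> R) :
  exists w : H, forall i, (i < N)%N -> A w i = g i.
Proof.
elim: N g => [|N IH] g; first by exists 0.
have [z [z0 z1]] := dual_vector_exists IH.
have [w wg] := IH g.
exists ((g N - A w N) *: z + w) => i; rewrite A_linear ltnS leq_eqVlt.
by case/orP=> [/eqP ->|iN]; rewrite ?z1 ?mulr1 ?subrK // z0 // mulr0 add0r wg.
Qed.

End Adjoint.

Theorem lemma2 (R : realType) (H : completeNormedModType R)
  (inner : H -> H -> R) (A : H -> nat -> R) (Astar : (nat -> R) -> H)
  (u_dag : nat -> R) :
  is_inner_product inner ->
  bounded_linear_to_c0 A ->
  is_adjoint inner A Astar ->
  injective A ->
  (forall u w, in_l1 u -> in_l1 w -> Astar u = Astar w -> u = w) ->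
  in_l1 u_dag ->
  (exists v : H, (forall i, `|A v i| <= 1) /\
     (forall i, u_dag i != 0 -> A v i = sgn (u_dag i))) ->
  exists v : H, [/\ (forall i, `|A v i| <= 1),
     (forall i, u_dag i != 0 -> A v i = sgn (u_dag i)) &
     (forall i, u_dag i = 0 -> `|A v i| < 1)].
Proof.
move=> ip [A_lin A_c0 [C A_bnd]] adj _ Astar_inj _ [v [v1 v_sgn]].
have [N _ vN] := cvgr0_norm_lt _ (A_c0 v) (1 / 2) ltac:(lra).
have tail n : (N <= n)%N -> u_dag n == 0 /\ `|A v n| < 1 / 2.
  move=> Nn; split; last exact: vN.
  by apply: contraLR (vN n Nn) => /[dup] /v_sgn -> /norm_sgn ->; rewrite -leNgt; lra.
have [w wN] := coords_surjective ip A_lin adj Astar_inj N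
  (fun i => if u_dag i == 0 then A v i else 0).
have [v' [v'_eq v'_lt]] := perturbation_lt1 A_lin v1 tail (A_bnd w) wN.
exists v'; split=> i; last 2 first.
- by move=> ui; rewrite v'_eq // v_sgn.
- by move=> /eqP; apply: v'_lt.
by have [/v'_lt/ltW|/v'_eq ->] := boolP (u_dag i == 0).
Qed.
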